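(* Let $A$ be a unital C$^*$-algebra, $H$ a Hilbert space, and let $\Phi : A \to B(H)$ be a unital $*$-homomorphism. Then $\Phi$ is an operational extreme point of the operational convex hull $S$ of the completely positive maps of $A$ into $B(H)$. That is: whenever $\Phi = \sum_{i=1}^m {\rm Ad}\, a_i \circ \Psi_i$ with $\Psi_1,\dots,\Psi_m \in S$ and $\{a_1,\dots,a_m\}$ a finite operational partition of unity in $B(H)$, there exist $z_1,\dots,z_m \in \Phi(A)'$ such that ${\rm Ad}\, a_i \circ \Psi_i = z_i \Phi$ for every $i$.
   Context: For an operator $v$, ${\rm Ad}\, v$ denotes the map $x \mapsto v x v^*$. A finite operational partition of unity of size $m$ in a unital C$^*$-algebra $B$ is a finite set $\{a_1,\dots,a_m\}$ of non-zero elements of $B$ with $\sum_{i=1}^m a_i a_i^* = 1_B$; the set of these is denoted $FOP_m(B)$. For linear maps $\Psi_1,\dots,\Psi_m$ and $\{a_i\}\in FOP_m(B)$, the map $\sum_{i=1}^m {\rm Ad}\, a_i \circ \Psi_i$ is called an operational convex combination of the $\Psi_i$; a set of linear maps is operational convex if it is closed under all operational convex combinations, and the operational convex hull of a set is the smallest operational convex set containing it. If $S$ is an operational convex set of positive linear maps from $A$ into a unital C$^*$-subalgebra $B$ of $B(H)$, a map $\Phi \in S$ is an operational extreme point of $S$ if whenever $\Phi = \sum_{i=1}^m {\rm Ad}\, a_i \circ \Psi_i$ with $\{\Psi_i\}\subset S$ and $\{a_i\} \in FOP_m(B)$, one has ${\rm Ad}\, a_i \circ \Psi_i = z_i \Phi$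 for some $z_i \in \Phi(A)' = \{z \in B(H) : zy = yz \ \forall y \in \Phi(A)\}$, for all $i$. Here $B = B(H)$. A map $\Phi$ is completely positive if $\Phi\otimes 1_k$ is positive on $A\otimes M_k(\mathbb{C})$ for all $k$. *)

From HB Require Import structures.
From mathcomp Require Import all_boot all_order all_algebra.
From mathcomp Require Import complex.
From mathcomp Require Import reals.
From Stdlib Require Import ClassicalEpsilon.
Set Implicit Arguments. Unset Strict Implicit. Unset Printing Implicit Defensive.
Import Order.TTheory GRing.Theory Num.Theory.
Local Open Scope ring_scope.

Section OpConvex.
Variable R : realType.
Local Notation C := (R[i]).

(* inner product linear in the first argument, conjugate-linear in the second *)
Record hilbert (H : lmodType C) := Hilbert {
  ip : H -> H -> C;
  ipD : forall x y z, ip (x + y) z = ip x z + ip y z;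
  ipZ : forall (c : C) x y, ip (c *: x) y = c * ip x y;
  ip_conj : forall x y, ip y x = conjc (ip x y);
  ip_ge0 : forall x, 0 <= ip x x;
  ip_eq0 : forall x, ip x x = 0 -> x = 0;
  (* completeness w.r.t. the norm ||x|| = sqrt <x,x> (stated with squared norms) *)
  ip_complete : forall u : nat -> H,
    (forall e : R, 0 < e -> exists N, forall p q, (N <= p)%N -> (N <= q)%N ->
        complex.Re (ip (u p - u q) (u p - u q)) < e) ->
    exists l : H, forall e : R, 0 < e -> exists N, forall p, (N <= p)%N ->
        complex.Re (ip (u p - l) (u p - l)) < e
}.

Variables (H : lmodType C) (HS : hilbert H).
Local Notation ipH := (ip HS).
Definition hn2 (x : H) : R := complex.Re (ipH x x).

Definition bounded_op (T : H -> H) : Prop :=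
  (forall x y, T (x + y) = T x + T y) /\
  (forall (c : C) x, T (c *: x) = c *: T x) /\
  (exists M : R, forall x, hn2 (T x) <= M * hn2 x).

(* the Hilbert-space adjoint (exists and is unique for bounded operators) *)
Definition adj (T : H -> H) : H -> H :=
  epsilon (inhabits T) (fun S => forall x y, ipH (T x) y = ipH x (S y)).

Definition Ad (v y : H -> H) : H -> H := fun h => v (y (adj v h)).

(* finite operational partitions of unity of size m in B(H):
   a set {a_1,...,a_m} of m (distinct) non-zero elements with sum a_i a_i^* = 1 *)
Definition FOP (m : nat) (a : 'I_m -> H -> H) : Prop :=
  (forall i, bounded_op (a i)) /\ injective a /\
  (forall i, a i <> (fun _ => 0)) /\
  (forall h, \sum_(i < m) a i (adj (a i) h) = h).

Record cstar (A : algType C) := CStar {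
  star : A -> A;
  cnorm : A -> R;
  starD : forall x y, star (x + y) = star x + star y;
  starZ : forall (c : C) x, star (c *: x) = conjc c *: star x;
  starM : forall x y, star (x * y) = star y * star x;
  starK : forall x, star (star x) = x;
  cnorm_ge0 : forall x, 0 <= cnorm x;
  cnorm_eq0 : forall x, cnorm x = 0 -> x = 0;
  cnormD : forall x y, cnorm (x + y) <= cnorm x + cnorm y;
  cnormZ : forall (c : C) x, cnorm (c *: x) = ComplexField.Normc.normc c * cnorm x;
  cnormM : forall x y, cnorm (x * y) <= cnorm x * cnorm y;
  cnorm_cstar : forall x, cnorm (star x * x) = cnorm x ^+ 2;
  cnorm_complete : forall u : nat -> A,
    (forall e : R, 0 < e -> exists N, forall p q, (N <= p)%N -> (N <= q)%N ->
        cnorm (u p - u q) < e) ->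
    exists l : A, forall e : R, 0 < e -> exists N, forall p, (N <= p)%N ->
        cnorm (u p - l) < e
}.

Variables (A : algType C) (AS : cstar A).
Local Notation st := (star AS).

Definition map_into_BH (Phi : A -> H -> H) : Prop :=
  (forall x y h, Phi (x + y) h = Phi x h + Phi y h) /\
  (forall (c : C) x h, Phi (c *: x) h = c *: Phi x h) /\
  (forall x, bounded_op (Phi x)).

(* Complete positivity: for every k, Phi (x) 1_k maps positive elements of
   A (x) M_k = M_k(A), i.e. elements Y^* Y, to positive operators on H^k. *)
Definition completely_positive (Phi : A -> H -> H) : Prop :=
  map_into_BH Phi /\
  forall (k : nat) (Y : 'I_k -> 'I_k -> A) (v : 'I_k -> H),
    0 <= \sum_(i < k) \sum_(j < k)
           ipH (Phi (\sum_(l < k) st (Y l i) * Y l j) (v j)) (v i).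

Definition opcomb (m : nat) (a : 'I_m -> H -> H) (Psi : 'I_m -> A -> H -> H)
  : A -> H -> H :=
  fun x h => \sum_(i < m) Ad (a i) (Psi i x) h.

Definition operational_convex (S : (A -> H -> H) -> Prop) : Prop :=
  forall (m : nat) (a : 'I_m -> H -> H) (Psi : 'I_m -> A -> H -> H),
    FOP a -> (forall i, S (Psi i)) -> S (opcomb a Psi).

Definition op_convex_hull (P : (A -> H -> H) -> Prop) : (A -> H -> H) -> Prop :=
  fun Phi => forall S, operational_convex S -> (forall Psi, P Psi -> S Psi) -> S Phi.

Definition in_commutant (Phi : A -> H -> H) (z : H -> H) : Prop :=
  bounded_op z /\ forall x h, z (Phi x h) = Phi x (z h).

Definition operational_extreme (S : (A -> H -> H) -> Prop) (Phi : A -> H -> H)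
  : Prop :=
  S Phi /\
  forall (m : nat) (a : 'I_m -> H -> H) (Psi : 'I_m -> A -> H -> H),
    FOP a -> (forall i, S (Psi i)) -> opcomb a Psi = Phi ->
    forall i, exists z, in_commutant Phi z /\
      forall x h, Ad (a i) (Psi i x) h = z (Phi x h).

Definition unital_star_hom (Phi : A -> H -> H) : Prop :=
  map_into_BH Phi /\
  (forall x y h, Phi (x * y) h = Phi x (Phi y h)) /\
  (forall h, Phi 1 h = h) /\
  (forall x, Phi (st x) = adj (Phi x)).

End OpConvex.

(* Each summand F = Ad a_i o Psi_i is a positive kernel: [(y, x) |-> F (y^* x)]
   induces a positive semidefinite sesquilinear form on formal tensors
   [sum x (x) h] of A (x) H.  This holds for completely positive maps and survives
   operational convex combinations, hence holds on the whole hull.  Moreover F is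
   dominated by Phi, whose form is [<sum Phi(x) h, sum Phi(y) k>] because Phi is a
   *-homomorphism.  So [x (x) h - 1 (x) Phi(x) h] is Phi-null, hence F-null, and
   Cauchy-Schwarz gives F(x) = F(1) Phi(x).  Hermitian symmetry of the form makes
   z = F(1) commute with Phi(A), and 0 <= z <= 1 makes it bounded.
   Since Ad is defined through a chosen adjoint, bounded operators must be shown
   to have adjoints: this is the Riesz representation theorem, obtained by
   minimising ||x||^2 - 2 Re f(x) over the complete space H. *)

From mathcomp Require Import all_boot all_order all_algebra.
From mathcomp Require Import complex reals.
From mathcomp Require Import ring lra.
From mathcomp Require boolp classical_sets.
From Stdlib Require Import ClassicalEpsilon.
Set Implicit Arguments. Unset Strict Implicit. Unset Printing Implicit Defensive.
Import Order.TTheory GRing.Theory Num.Theory.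
Local Open Scope ring_scope.

Local Notation Re := complex.Re.
Local Notation Im := complex.Im.

Section ComplexQuadratic.
Variable R : rcfType.
Implicit Types (z w a b c d t : R[i]).

Lemma ReM z w : Re (z * w) = Re z * Re w - Im z * Im w.
Proof. by case: z; case: w. Qed.

Lemma ImM z w : Im (z * w) = Re z * Im w + Im z * Re w.
Proof. by case: z => ? ?; case: w => ? ? /=; ring. Qed.

Lemma ReJ z : Re (conjc z) = Re z. Proof. by case: z. Qed.
Lemma ImJ z : Im (conjc z) = - Im z. Proof. by case: z. Qed.

Lemma ReD z w : Re (z + w) = Re z + Re w. Proof. by case: z; case: w. Qed.
Lemma ImD z w : Im (z + w) = Im z + Im w. Proof. by case: z; case: w. Qed.
Lemma ReN z : Re (- z) = - Re z. Proof. by case: z. Qed.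
Lemma ImN z : Im (- z) = - Im z. Proof. by case: z. Qed.

Lemma conjcD z w : conjc (z + w) = conjc z + conjc w. Proof. exact: rmorphD. Qed.
Lemma conjcB z w : conjc (z - w) = conjc z - conjc w. Proof. exact: rmorphB. Qed.
Lemma conjcM z w : conjc (z * w) = conjc z * conjc w. Proof. exact: rmorphM. Qed.

Definition ReImE := (ReD, ImD, ReN, ImN, ReM, ImM, ReJ, ImJ).

Lemma ge0_ReIm z : 0 <= z -> Im z = 0 /\ 0 <= Re z.
Proof. by rewrite lecE => /andP[/eqP]. Qed.

Lemma le_Re z w : z <= w -> Re z <= Re w.
Proof. by rewrite lecE => /andP[]. Qed.

Lemma complex_ReIm_eq z w : Re z = Re w -> Im z = Im w -> z = w.
Proof. by case: z; case: w => ? ? ? ? /= -> ->. Qed.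

Lemma discriminant_le (c b d : R) :
  0 <= d -> (forall s, 0 <= c + 2 * s * b + s ^+ 2 * d) -> b ^+ 2 <= c * d.
Proof.
move=> d_ge0 pos.
have c_ge0 : 0 <= c by have := pos 0; lra.
have [d0 | d_neq0] := eqVneq d 0.
  have [-> | b_neq0] := eqVneq b 0; first by rewrite expr0n mulr_ge0 ?d0.
  have := pos (- (c + 1) / (2 * b)); rewrite d0.
  have -> : 2 * (- (c + 1) / (2 * b)) * b = - (c + 1) by field.
  lra.
have d_gt0 : 0 < d by rewrite lt_def d_neq0.
have := pos (- b / d).
have -> : c + 2 * (- b / d) * b + (- b / d) ^+ 2 * d = c - b ^+ 2 / d by field.
by rewrite subr_ge0 ler_pdivrMr.
Qed.

Lemma quadratic_herm c a b d :
  (forall t, 0 <= c + conjc t * a + t * b + t * conjc t * d) -> b = conjc a.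
Proof.
move=> pos.
have := (ge0_ReIm (pos 1)).1; have := (ge0_ReIm (pos (-1))).1.
have := (ge0_ReIm (pos 'i%C)).1; have := (ge0_ReIm (pos (- 'i%C))).1.
rewrite !ReImE /= => *.
by apply: complex_ReIm_eq; rewrite !ReImE; lra.
Qed.

Lemma quadratic_CS c a b d : 0 <= d ->
  (forall t, 0 <= c + conjc t * a + t * b + t * conjc t * d) ->
  Re a ^+ 2 + Im a ^+ 2 <= Re c * Re d.
Proof.
move=> d_ge0 pos; have b_eq := quadratic_herm pos; subst b.
have [Im_d0 Re_d_ge0] := ge0_ReIm d_ge0.
set N := Re a ^+ 2 + Im a ^+ 2.
have N_ge0 : 0 <= N by rewrite addr_ge0 ?sqr_ge0.
have along_a s : 0 <= Re c + 2 * s * N + s ^+ 2 * (N * Re d).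
  have := (ge0_ReIm (pos ((s%:C)%C * a))).2.
  by rewrite !ReImE /= Im_d0 /N; nra.
have := discriminant_le (mulr_ge0 N_ge0 Re_d_ge0) along_a.
have [-> _ | N_neq0] := eqVneq N 0.
  by rewrite mulr_ge0 //; have := along_a 0; lra.
rewrite expr2 mulrCA (mulrC N) ler_pM2l //.
by rewrite lt_def N_neq0.
Qed.
End ComplexQuadratic.

(** * Riesz representation and adjoints *)

Section Hilbert.
Variable R : realType.
Variables (H : lmodType R[i]) (HS : hilbert H).
Local Notation ip := (ip HS).
Local Notation hn2 := (hn2 HS).

Lemma ipNl x y : ip (- x) y = - ip x y.
Proof. by rewrite -scaleN1r ipZ mulN1r. Qed.

Lemma ipBl x y z : ip (x - y) z = ip x z - ip y z.
Proof. by rewrite ipD ipNl. Qed.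

Lemma ip0l y : ip 0 y = 0.
Proof. by rewrite -(subrr 0) ipBl subrr. Qed.

Lemma ipDr x y z : ip x (y + z) = ip x y + ip x z.
Proof. by rewrite ip_conj ipD conjcD -!ip_conj. Qed.

Lemma ipZr (c : R[i]) x y : ip x (c *: y) = conjc c * ip x y.
Proof. by rewrite ip_conj ipZ conjcM -ip_conj. Qed.

Lemma ip0r x : ip x 0 = 0.
Proof. by rewrite ip_conj ip0l conjc0. Qed.

Lemma ipBr x y z : ip x (y - z) = ip x y - ip x z.
Proof. by rewrite ip_conj ipBl conjcB -!ip_conj. Qed.

Lemma ip_suml (I : Type) (r : seq I) (F : I -> H) y :
  ip (\sum_(i <- r) F i) y = \sum_(i <- r) ip (F i) y.
Proof. exact: (big_morph (ip^~ y) (fun a b => ipD HS a b y) (ip0l y)). Qed.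

Lemma ip_sumr (I : Type) (r : seq I) (F : I -> H) y :
  ip y (\sum_(i <- r) F i) = \sum_(i <- r) ip y (F i).
Proof. exact: (big_morph (ip y) (ipDr y) (ip0r y)). Qed.

Lemma ip_injl a b : (forall k, ip a k = ip b k) -> a = b.
Proof.
move=> eq_ab; apply/eqP; rewrite -subr_eq0; apply/eqP.
by apply: (@ip_eq0 _ _ HS (a - b)); rewrite ipBl eq_ab subrr.
Qed.

Lemma ip_injr a b : (forall k, ip k a = ip k b) -> a = b.
Proof. by move=> eq_ab; apply: ip_injl => k; rewrite ip_conj eq_ab -ip_conj. Qed.

Lemma hn2_ge0 x : 0 <= hn2 x.
Proof. exact: (ge0_ReIm (ip_ge0 HS x)).2. Qed.

Lemma ip_CS x y : Re (ip x y) ^+ 2 + Im (ip x y) ^+ 2 <= hn2 x * hn2 y.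
Proof.
apply: (@quadratic_CS _ _ _ (ip y x) _ (ip_ge0 HS y)) => t.
have -> : ip x x + conjc t * ip x y + t * ip y x + t * conjc t * ip y y =
          ip (x + t *: y) (x + t *: y) by rewrite ipD !ipDr !ipZ !ipZr; ring.
exact: ip_ge0.
Qed.

Definition rip x y := Re (ip x y).

Lemma hn2E x : hn2 x = rip x x. Proof. by []. Qed.

Lemma ripDl x y z : rip (x + y) z = rip x z + rip y z.
Proof. by rewrite /rip ipD ReD. Qed.
Lemma ripDr x y z : rip x (y + z) = rip x y + rip x z.
Proof. by rewrite /rip ipDr ReD. Qed.
Lemma ripBl x y z : rip (x - y) z = rip x z - rip y z.
Proof. by rewrite /rip ipBl ReD ReN. Qed.
Lemma ripBr x y z : rip x (y - z) = rip x y - rip x z.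
Proof. by rewrite /rip ipBr ReD ReN. Qed.
Lemma ripZl (s : R) x y : rip ((s%:C)%C *: x) y = s * rip x y.
Proof. by rewrite /rip ipZ ReM /=; ring. Qed.
Lemma ripZr (s : R) x y : rip x ((s%:C)%C *: y) = s * rip x y.
Proof. by rewrite /rip ipZr ReM ReJ /=; ring. Qed.
Lemma ripC x y : rip x y = rip y x.
Proof. by rewrite /rip ip_conj ReJ. Qed.

Lemma rip_CS x y : rip x y ^+ 2 <= hn2 x * hn2 y.
Proof. by apply: le_trans (ip_CS x y); rewrite lerDl sqr_ge0. Qed.

Lemma rip_small x (e : R) : 0 < e -> exists2 d, 0 < d & forall y, hn2 y < d -> rip y x < e.
Proof.
move=> e_gt0; have x_ge0 := hn2_ge0 x.
exists (e ^+ 2 / (hn2 x + 1)) => [|y y_small]; first by rewrite divr_gt0 ?exprn_gt0; lra.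
have := rip_CS y x; have := hn2_ge0 y.
have : hn2 y * (hn2 x + 1) < e ^+ 2 by rewrite -ltr_pdivlMr; lra.
nra.
Qed.

Lemma inv_succ_lt_eventually (e : R) :
  0 < e -> exists N, forall n, (N <= n)%N -> (n.+1%:R)^-1 < e.
Proof.
move=> e_gt0; exists (Num.bound e^-1) => n le_Nn.
have := archi_boundP (ltW (_ : 0 < e^-1)); rewrite invr_gt0 => /(_ e_gt0) lt_bound.
rewrite invf_plt ?posrE ?ltr0Sn //; apply: (lt_le_trans lt_bound).
by rewrite ler_nat (leq_trans le_Nn).
Qed.

Section RealRiesz.
Variables (g : H -> R) (K : R).
Hypotheses (gD : forall x y, g (x + y) = g x + g y)
  (gZ : forall (s : R) x, g ((s%:C)%C *: x) = s * g x)
  (K_ge0 : 0 <= K) (g_bounded : forall x, g x ^+ 2 <= K * hn2 x).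

(* A minimiser of [J] represents [g]. *)
Let J x := hn2 x - 2 * g x.

Lemma J_lbound x : - K <= J x.
Proof.
rewrite /J; have := g_bounded x; have := hn2_ge0 x; set h := hn2 x => h_ge0 g_le.
have Kh_ge0 : 0 <= K + h by rewrite addr_ge0.
have : `|2 * g x| ^+ 2 <= (K + h) ^+ 2.
  by rewrite real_normK ?num_real //; have := sqr_ge0 (K - h); nra.
rewrite ler_sqr ?nnegrE // => norm_le.
by have := ler_norm (2 * g x); lra.
Qed.

Lemma J_parallelogram a b :
  hn2 (a - b) = 2 * J a + 2 * J b - 4 * J ((2^-1%:C)%C *: (a + b)).
Proof.
rewrite /J !hn2E gZ gD ripBl !ripBr ripZl ripZr !ripDl !ripDr (ripC b a).
by field.
Qed.

Lemma J_shift a x (s : R) :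
  J (a + (s%:C)%C *: x) = J a + 2 * s * rip a x + s ^+ 2 * hn2 x - 2 * s * g x.
Proof.
rewrite /J !hn2E gD gZ !ripDl !ripDr !ripZl !ripZr (ripC x a).
by ring.
Qed.

Lemma J_minimizing_seq : exists m (u : nat -> H),
  (forall x, m <= J x) /\ (forall n, J (u n) < m + (n.+1%:R)^-1).
Proof.
pose E y := exists x, y = J x.
have E_inf : classical_sets.has_inf E.
  split; first by exists (J 0), 0.
  by exists (- K) => _ [x ->]; apply: J_lbound.
exists (inf E).
have approx n : exists x, J x < inf E + (n.+1%:R)^-1.
  have inv_gt0 : 0 < (n.+1%:R : R)^-1 by rewrite invr_gt0 ltr0Sn.
  by have [_ [x ->] lt_inf] := inf_adherent inv_gt0 E_inf; exists x.
have [u uP] := boolp.choice approx.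
exists u; split => // x.
by apply: (ge_inf E_inf.2); exists x.
Qed.

Section Minimizing.
Variables (m : R) (u : nat -> H).
Hypotheses (m_lbound : forall x, m <= J x)
  (u_minimizing : forall n, J (u n) < m + (n.+1%:R)^-1).

Lemma minimizing_cauchy (e : R) : 0 < e ->
  exists N, forall p q, (N <= p)%N -> (N <= q)%N -> hn2 (u p - u q) < e.
Proof.
move=> e_gt0; have [N small] := inv_succ_lt_eventually (divr_gt0 e_gt0 (ltr0Sn _ 3)).
exists N => p q le_Np le_Nq; rewrite J_parallelogram.
have := m_lbound ((2^-1%:C)%C *: (u p + u q)).
have := u_minimizing p; have := u_minimizing q; have := small p le_Np; have := small q le_Nq.
move: (p.+1%:R^-1) (q.+1%:R^-1) => inv_p inv_q; lra.
Qed.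

Lemma minimizing_limit_euler l :
  (forall e, 0 < e -> exists N, forall p, (N <= p)%N -> hn2 (u p - l) < e) ->
  forall x (s : R), 0 <= 2 * s * (rip l x - g x) + s ^+ 2 * hn2 x.
Proof.
move=> u_to_l x s; apply/ler_addgt0Pr => e e_gt0.
have e2_gt0 : 0 < e / 2 by rewrite divr_gt0.
have [d d_gt0 rip_lt] := rip_small (((2 * s)%:C)%C *: x) e2_gt0.
have [N1 near_l] := u_to_l d d_gt0.
have [N2 small] := inv_succ_lt_eventually e2_gt0.
pose n := maxn N1 N2.
have := m_lbound (u n + (s%:C)%C *: x); rewrite J_shift.
have := u_minimizing n; have := small n (leq_maxr _ _).
have := rip_lt _ (near_l n (leq_maxl _ _)); rewrite ripZr ripBl.
move: (n.+1%:R^-1) => inv_n; lra.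
Qed.
End Minimizing.

Lemma real_riesz : exists l, forall x, g x = rip l x.
Proof.
have [m [u [m_lbound u_minimizing]]] := J_minimizing_seq.
have [l u_to_l] := @ip_complete _ _ HS u (minimizing_cauchy m_lbound u_minimizing).
exists l => x.
have euler := minimizing_limit_euler m_lbound u_minimizing u_to_l x.
have : (rip l x - g x) ^+ 2 <= 0 * hn2 x.
  by apply: discriminant_le (hn2_ge0 x) _ => s; rewrite add0r.
rewrite mul0r => sq_le0.
have : rip l x - g x = 0 by apply/eqP; rewrite -sqrf_eq0 eq_le sq_le0 sqr_ge0.
lra.
Qed.
End RealRiesz.

Lemma riesz (f : H -> R[i]) :
  (forall x y, f (x + y) = f x + f y) -> (forall c x, f (c *: x) = c * f x) ->
  (exists2 K, 0 <= K & forall x, Re (f x) ^+ 2 + Im (f x) ^+ 2 <= K * hn2 x) ->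
  exists l, forall x, f x = ip x l.
Proof.
move=> fD fZ [K K_ge0 f_bounded].
have [l Re_f] : exists l, forall x, Re (f x) = rip l x.
  apply: (@real_riesz (fun x => Re (f x)) K) => // [x y | s x | x].
  - by rewrite fD ReD.
  - by rewrite fZ ReM /=; ring.
  - by apply: le_trans (f_bounded x); rewrite lerDl sqr_ge0.
exists l => x; apply: complex_ReIm_eq; first by rewrite Re_f /rip ip_conj ReJ.
have := Re_f ('i%C *: x); rewrite fZ /rip ipZr ip_conj !ReImE /=.
lra.
Qed.

Definition is_adjoint (T S : H -> H) := forall x y, ip (T x) y = ip x (S y).

Definition linear_op (T : H -> H) :=
  (forall x y, T (x + y) = T x + T y) /\ (forall (c : R[i]) x, T (c *: x) = c *: T x).

Lemma bounded_op_linear T : bounded_op HS T -> linear_op T.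
Proof. by case=> TD [TZ _]. Qed.

Lemma linear_opN T x : linear_op T -> T (- x) = - T x.
Proof. by case=> _ TZ; rewrite -scaleN1r TZ scaleN1r. Qed.

Lemma adjP T : bounded_op HS T -> is_adjoint T (adj HS T).
Proof.
case=> TD [TZ [M T_bounded]].
have represent y : exists u, forall x, ip (T x) y = ip x u.
  apply: riesz => [a b | c a |]; [by rewrite TD ipD | by rewrite TZ ipZ |].
  exists (hn2 y * Num.max M 0); first by rewrite mulr_ge0 ?hn2_ge0 ?le_max ?lexx ?orbT.
  move=> x; apply: le_trans (ip_CS (T x) y) _.
  rewrite mulrC -mulrA ler_wpM2l ?hn2_ge0 //; apply: le_trans (T_bounded x) _.
  by rewrite ler_wpM2r ?hn2_ge0 ?le_max ?lexx.
have [S S_adj] := boolp.choice represent.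
by apply: (epsilon_spec (inhabits T)); exists S => x y; apply: S_adj.
Qed.

Lemma adjoint_linear T S : is_adjoint T S -> linear_op S.
Proof.
move=> TS; split => [x y | c x]; apply: ip_injr => k.
  by rewrite ipDr -!TS ipDr.
by rewrite ipZr -!TS ipZr.
Qed.

(** * Positive kernels *)

Section PositiveKernel.
Variables (A : algType R[i]) (AS : cstar A).
Local Notation st := (star AS).

Lemma star1 : st 1 = 1.
Proof.
have st1_eq : st 1 = st 1 * st (st 1) by rewrite starK mulr1.
by rewrite st1_eq -starM mulr1 starK.
Qed.

(* Tensors [sum_(p <- s) p.1 (x) p.2] are encoded by [s : seq (A * H)]; the form
   is linear in [l] and conjugate-linear in [r]. *)
Definition kform (F : A -> H -> H) (l r : seq (A * H)) : R[i] :=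
  \sum_(p <- r) \sum_(q <- l) ip (F (st p.1 * q.1) q.2) p.2.

Definition positive_kernel (F : A -> H -> H) :=
  (forall x, linear_op (F x)) /\ forall s, 0 <= kform F s s.

Definition map_tensor (T : H -> H) (s : seq (A * H)) := [seq (p.1, T p.2) | p <- s].

Lemma kform_single F x h y k : kform F [:: (x, h)] [:: (y, k)] = ip (F (st y * x) h) k.
Proof. by rewrite /kform !big_seq1. Qed.

Lemma kform_catl F l1 l2 r : kform F (l1 ++ l2) r = kform F l1 r + kform F l2 r.
Proof. by rewrite /kform -big_split; apply: eq_bigr => p _; rewrite big_cat. Qed.

Lemma kform_catr F l r1 r2 : kform F l (r1 ++ r2) = kform F l r1 + kform F l r2.
Proof. exact: big_cat. Qed.

Lemma kform_scalel F t l r : (forall x, linear_op (F x)) ->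
  kform F (map_tensor ( *:%R t) l) r = t * kform F l r.
Proof.
move=> F_lin; rewrite /kform mulr_sumr; apply: eq_bigr => p _.
by rewrite big_map mulr_sumr; apply: eq_bigr => q _; rewrite (F_lin _).2 ipZ.
Qed.

Lemma kform_scaler F t l r : kform F l (map_tensor ( *:%R t) r) = conjc t * kform F l r.
Proof.
rewrite /kform big_map mulr_sumr; apply: eq_bigr => p _.
by rewrite mulr_sumr; apply: eq_bigr => q _; rewrite ipZr.
Qed.

Lemma kform_quadratic F l r t : (forall x, linear_op (F x)) ->
  kform F (l ++ map_tensor ( *:%R t) r) (l ++ map_tensor ( *:%R t) r) =
  kform F l l + conjc t * kform F l r + t * kform F r l + t * conjc t * kform F r r.
Proof. by move=> F_lin; rewrite kform_catl !kform_catr !kform_scalel // !kform_scaler; ring. Qed.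

Lemma positive_kernel_herm F l r : positive_kernel F -> kform F r l = conjc (kform F l r).
Proof.
case=> F_lin F_pos; apply: (@quadratic_herm _ (kform F l l) _ _ (kform F r r)) => t.
by rewrite -kform_quadratic.
Qed.

Lemma positive_kernel_CS F l r : positive_kernel F ->
  Re (kform F l r) ^+ 2 + Im (kform F l r) ^+ 2 <= Re (kform F l l) * Re (kform F r r).
Proof.
case=> F_lin F_pos; apply: (@quadratic_CS _ _ _ (kform F r l) _ (F_pos r)) => t.
by rewrite -kform_quadratic.
Qed.

Lemma positive_kernel_null F l r : positive_kernel F -> kform F l l = 0 -> kform F l r = 0.
Proof.
move=> F_pk ll0; have := positive_kernel_CS l r F_pk; rewrite ll0 mul0r => sum_sq_le0.
by apply: complex_ReIm_eq => /=; nra.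
Qed.

Lemma positive_kernel_adjoint F y : positive_kernel F -> is_adjoint (F y) (F (st y)).
Proof.
move=> F_pk h k; have herm := positive_kernel_herm [:: (y, h)] [:: (1, k)] F_pk.
rewrite !kform_single star1 mulr1 mul1r in herm.
by rewrite [RHS]ip_conj herm conjcK.
Qed.

Lemma kform_sum m F (G : 'I_m -> A -> H -> H) l r :
  (forall x h, F x h = \sum_(i < m) G i x h) -> kform F l r = \sum_(i < m) kform (G i) l r.
Proof.
move=> F_sum; rewrite /kform.
under eq_bigr => p _ do under eq_bigr => q _ do rewrite F_sum ip_suml.
under eq_bigr => p _ do rewrite exchange_big.
by rewrite exchange_big.
Qed.

Lemma kform_Ad F a l r : bounded_op HS a ->
  kform (fun x => Ad HS a (F x)) l r = kform F (map_tensor (adj HS a) l) (map_tensor (adj HS a) r).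
Proof.
move=> a_bd; rewrite /kform big_map; apply: eq_bigr => p _.
by rewrite big_map; apply: eq_bigr => q _; rewrite /Ad adjP.
Qed.

Lemma positive_kernel_Ad F a : bounded_op HS a -> positive_kernel F ->
  positive_kernel (fun x => Ad HS a (F x)).
Proof.
move=> a_bd [F_lin F_pos]; split => [x | s]; last by rewrite kform_Ad.
have [aD aZ] := bounded_op_linear a_bd; have [adjD adjZ] := adjoint_linear (adjP a_bd).
have [FD FZ] := F_lin x.
by split => [h k | c h]; rewrite /Ad ?adjD ?FD ?aD ?adjZ ?FZ ?aZ.
Qed.

Lemma positive_kernel_opconvex : operational_convex HS positive_kernel.
Proof.
move=> m a Psi [a_bd _] Psi_pk.
have Ad_pk i := positive_kernel_Ad (a_bd i) (Psi_pk i).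
split => [x | s].
  split => [h k | c h]; rewrite /opcomb ?scaler_sumr -?big_split; apply: eq_bigr => i _.
    exact: ((Ad_pk i).1 x).1.
  exact: ((Ad_pk i).1 x).2.
rewrite (@kform_sum m _ (fun i x => Ad HS (a i) (Psi i x))) //.
by apply: sumr_ge0 => i _; apply: (Ad_pk i).2.
Qed.

Lemma cp_positive_kernel F : completely_positive HS AS F -> positive_kernel F.
Proof.
case=> [[_ [_ F_bd]] F_cp]; split => [x | s]; first exact: bounded_op_linear.
case: s => [|p0 s]; first by rewrite /kform big_nil.
(* [p0 :: s] becomes the only nonzero row of a square matrix over A. *)
set n := size (p0 :: s); pose v (j : 'I_n) := (nth p0 (p0 :: s) j).2.
pose Y (l j : 'I_n) := if val l == 0%N then (nth p0 (p0 :: s) j).1 else 0.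
suff -> : kform F (p0 :: s) (p0 :: s) =
    \sum_(i < n) \sum_(j < n) ip (F (\sum_(l < n) st (Y l i) * Y l j) (v j)) (v i).
  exact: F_cp.
rewrite /kform (big_nth p0) big_mkord; apply: eq_bigr => i _.
rewrite (big_nth p0) big_mkord; apply: eq_bigr => j _.
by rewrite big_ord_recl big1 => [|l _]; rewrite ?addr0 // /Y /= mulr0.
Qed.

Lemma op_convex_hull_positive_kernel F :
  op_convex_hull HS (completely_positive HS AS) F -> positive_kernel F.
Proof. by apply; [exact: positive_kernel_opconvex | exact: cp_positive_kernel]. Qed.

(** * Maps dominated by a *-homomorphism *)

Section StarHom.
Variable Phi : A -> H -> H.
Hypothesis Phi_hom : unital_star_hom HS AS Phi.

Lemma star_hom_adjoint x : is_adjoint (Phi x) (Phi (st x)).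
Proof. by have [[_ [_ Phi_bd]] [_ [_ ->]]] := Phi_hom; apply: adjP. Qed.

Definition tensor_eval (s : seq (A * H)) := \sum_(p <- s) Phi p.1 p.2.

Lemma kform_star_hom l r : kform Phi l r = ip (tensor_eval l) (tensor_eval r).
Proof.
have [_ [Phi_mul _]] := Phi_hom.
rewrite /tensor_eval ip_sumr; apply: eq_bigr => p _; rewrite ip_suml; apply: eq_bigr => q _.
by rewrite Phi_mul star_hom_adjoint starK.
Qed.

Lemma star_hom_cp : completely_positive HS AS Phi.
Proof.
have [Phi_map _] := Phi_hom; have [PhiD [PhiZ _]] := Phi_map; split=> // k Y v.
have Phi_sum (f : 'I_k -> A) h : Phi (\sum_(l < k) f l) h = \sum_(l < k) Phi (f l) h.
  have Phi0 : Phi 0 h = 0 by rewrite -(scale0r (0 : A)) PhiZ scale0r.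
  exact: (big_morph (Phi^~ h) (fun x y => PhiD x y h) Phi0).
pose row l := [seq (Y l j, v j) | j <- index_enum 'I_k].
have -> : \sum_(i < k) \sum_(j < k) ip (Phi (\sum_(l < k) st (Y l i) * Y l j) (v j)) (v i)
        = \sum_(l < k) kform Phi (row l) (row l).
  under eq_bigr => i _ do under eq_bigr => j _ do rewrite Phi_sum ip_suml.
  under eq_bigr => i _ do rewrite exchange_big.
  rewrite exchange_big; apply: eq_bigr => l _.
  by rewrite /kform big_map; apply: eq_bigr => i _; rewrite big_map.
by apply: sumr_ge0 => l _; rewrite kform_star_hom ip_ge0.
Qed.

Section Dominated.
Variable F : A -> H -> H.
Hypotheses (F_pk : positive_kernel F) (F_le : forall s, kform F s s <= kform Phi s s).

Lemma dominated_factor x h : F x h = F 1 (Phi x h).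
Proof.
have [_ [_ [Phi1 _]]] := Phi_hom.
set w := Phi x h; set xi := [:: (x, h); (1, - w)].
(* [x (x) h - 1 (x) w] is null for the Phi-form, hence for the F-form. *)
have null : kform F xi xi = 0.
  apply: le_anti; rewrite F_pk.2 andbT; apply: le_trans (F_le xi) _.
  by rewrite kform_star_hom /tensor_eval !big_cons big_nil /= Phi1 addr0 subrr ip0l.
apply: ip_injl => k; apply/eqP; rewrite -subr_eq0; apply/eqP.
have := positive_kernel_null [:: (1, k)] F_pk null.
rewrite /kform big_seq1 !big_cons big_nil /= star1 !mul1r addr0.
by rewrite (linear_opN _ (F_pk.1 1)) ipNl.
Qed.

Lemma dominated_commute x h : F 1 (Phi x h) = Phi x (F 1 h).
Proof.
have F1_selfadjoint : is_adjoint (F 1) (F 1).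
  by have := positive_kernel_adjoint 1 F_pk; rewrite star1.
apply: ip_injl => k.
rewrite -(dominated_factor x h) (positive_kernel_adjoint x F_pk) (dominated_factor (st x) k).
by rewrite -F1_selfadjoint -star_hom_adjoint.
Qed.

Lemma dominated_contraction h : hn2 (F 1 h) <= hn2 h.
Proof.
have [_ [_ [Phi1 _]]] := Phi_hom.
have diag g : 0 <= Re (ip (F 1 g) g) <= hn2 g.
  have := F_le [:: (1, g)]; have := F_pk.2 [:: (1, g)].
  rewrite kform_star_hom /tensor_eval big_seq1 Phi1 kform_single star1 mulr1.
  by move=> /ge0_ReIm[_ ->] /le_Re.
(* ||z h||^4 = |<z h, z h>|^2 <= <z h, h> <z (z h), z h> <= ||h||^2 ||z h||^2 *)
set k := F 1 h; have := positive_kernel_CS [:: (1, h)] [:: (1, k)] F_pk.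
rewrite !kform_single star1 mulr1 -/k; change (Re (ip k k)) with (hn2 k).
have /andP[? ?] := diag h; have /andP[? ?] := diag k.
have := hn2_ge0 k; have := hn2_ge0 h.
nra.
Qed.

Lemma dominated_in_commutant : in_commutant HS Phi (F 1).
Proof.
have [FD FZ] := F_pk.1 1.
split; last exact: dominated_commute.
by split=> //; split=> //; exists 1 => h; rewrite mul1r dominated_contraction.
Qed.

End Dominated.
End StarHom.
End PositiveKernel.
End Hilbert.

Theorem mainTheorem2 (R : realType) (H : lmodType (R[i])) (HS : hilbert H)
  (A : algType (R[i])) (AS : cstar A) (Phi : A -> H -> H) :
  unital_star_hom HS AS Phi ->
  operational_extreme HS (op_convex_hull HS (completely_positive HS AS)) Phi.
Proof.
move=> Phi_hom; split=> [S _ cp_S | m a Psi [a_bd _] Psi_hull Phi_eq i].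
  exact/cp_S/star_hom_cp.
pose phi r x := Ad HS (a r) (Psi r x).
have phi_pk r : positive_kernel HS AS (phi r).
  exact: positive_kernel_Ad (a_bd r) (op_convex_hull_positive_kernel (Psi_hull r)).
have phi_le s : kform HS AS (phi i) s s <= kform HS AS Phi s s.
  rewrite -Phi_eq [leRHS](kform_sum HS AS (G := phi)) // (bigD1 i) //= lerDl.
  by apply: sumr_ge0 => r _; apply: (phi_pk r).2.
exists (phi i 1); split; first exact: (dominated_in_commutant Phi_hom (phi_pk i) phi_le).
exact: (dominated_factor Phi_hom (phi_pk i) phi_le).
Qed.
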